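(* Let $R$ be a $\mathbb{C}$-algebra which is a noetherian UFD, let $r,s\in R$ be nonzero elements sharing no common non-unit factor, and let $A_{r,s}:=R[U,V]/(rU-sV-1)$ with $u,v$ the residue classes of $U,V$. Assume that $A_{r,s}$ is a UFD and that $ML(A_{r,s})=R$. Then $\operatorname{LND}(A_{r,s})=R\,E=\{aE: a\in R\}$, where $E$ is the $R$-derivation of $A_{r,s}$ determined by $E(u)=s$, $E(v)=r$.
   Context: A derivation $D$ of a ring $B$ is locally nilpotent if for every $b\in B$ there is $n$ with $D^n(b)=0$; $\operatorname{LND}(B)$ denotes the set of locally nilpotent $\mathbb{C}$-derivations of the $\mathbb{C}$-algebra $B$. The Makar-Limanov invariant $ML(B)$ is the intersection of the kernels of all $D\in\operatorname{LND}(B)$. The derivation $E$ (written $s\partial_u+r\partial_v$ in the paper) is well defined since $E(ru-sv-1)=rs-sr=0$. *)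

From HB Require Import structures.
From mathcomp Require Import all_boot all_algebra.
From mathcomp Require Export complex Rstruct.
Set Implicit Arguments. Unset Strict Implicit. Unset Printing Implicit Defensive.
Import GRing.Theory.
Local Open Scope ring_scope.

Definition CC : fieldType := complex.complex Rdefinitions.R.

Section RingNotions.
Variable T : comNzRingType.

Definition dvdr_ (a b : T) : Prop := exists c, b = a * c.
Definition unit_ (a : T) : Prop := dvdr_ a 1.
Definition irreducible_ (p : T) : Prop :=
  p <> 0 /\ ~ unit_ p /\ forall a b, p = a * b -> unit_ a \/ unit_ b.
Definition prime_ (p : T) : Prop :=
  p <> 0 /\ ~ unit_ p /\ forall a b, dvdr_ p (a * b) -> dvdr_ p a \/ dvdr_ p b.

Definition is_UFD : Prop :=
  [/\ (1 : T) <> 0,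
      (forall a b : T, a * b = 0 -> a = 0 \/ b = 0),
      (forall a : T, a <> 0 -> ~ unit_ a ->
         exists s : seq T, (forall p, p \in s -> irreducible_ p) /\ a = \prod_(p <- s) p)
    & (forall p : T, irreducible_ p -> prime_ p)].

Definition is_ideal (I : T -> Prop) : Prop :=
  [/\ I 0, (forall x y, I x -> I y -> I (x + y)) & (forall a x, I x -> I (a * x))].

Definition is_noetherian : Prop :=
  forall I : nat -> T -> Prop, (forall n, is_ideal (I n)) ->
    (forall n x, I n x -> I n.+1 x) ->
    exists N, forall m, (N <= m)%N -> forall x, I m x -> I N x.

(* k-derivation of T, where k acts on T through the map iota : K -> T:
   an additive map, k-linear, satisfying the Leibniz rule. *)
Definition is_derivation (K : Type) (iota : K -> T) (D : T -> T) : Prop :=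
  [/\ (forall x y, D (x + y) = D x + D y),
      (forall c x, D (iota c * x) = iota c * D x)
    & (forall x y, D (x * y) = x * D y + y * D x)].

Definition locally_nilpotent (D : T -> T) : Prop :=
  forall b, exists n, iter n D b = 0.

Definition is_LND (K : Type) (iota : K -> T) (D : T -> T) : Prop :=
  is_derivation iota D /\ locally_nilpotent D.

End RingNotions.

(* The polynomial ring R[U,V] is {poly {poly R}}: U is the inner variable,
   V the outer one. *)
Section Presentation.
Variable R : comNzRingType.
Definition varU : {poly {poly R}} := ('X)%:P.
Definition varV : {poly {poly R}} := 'X.
Definition cst (a : R) : {poly {poly R}} := a%:P%:P.
Definition relf (r s : R) : {poly {poly R}} := cst r * varU - cst s * varV - 1.
End Presentation.

From mathcomp Require Import all_boot all_algebra.
From mathcomp Require Import ring zify.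
Set Implicit Arguments.
Unset Strict Implicit.
Import GRing.Theory Num.Theory.
Local Open Scope ring_scope.

(* A C-derivation D of A that kills R satisfies r D(u) = s D(v), and then the
   relation r u - s v = 1 forces D(u) = s h and D(v) = r h for h = u D(v) - v D(u),
   that is D = h E.  If moreover D is locally nilpotent, pick a local slice w
   (D w <> 0 = D (D w)); then D w = h E(w) lies in ker D, which is factorially
   closed in a domain of characteristic 0, so D h = h E(h) = 0 and E(h) = 0.
   Hence every locally nilpotent D' kills h, since D' h = h' E(h); so h lies in
   ML(A) = R.  Conversely a E is locally nilpotent for a in R: it is nilpotent on
   R, u and v, and by the Leibniz rule nilpotent elements form a subring. *)

Section Derivation.
Variables (A : comNzRingType) (D : A -> A).
Hypotheses (D_add : {morph D : x y / x + y})
  (D_Leibniz : forall x y, D (x * y) = x * D y + y * D x).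

Lemma derivation0 : D 0 = 0.
Proof. by apply/esym/(@addrI _ (D 0)); rewrite addr0 -D_add addr0. Qed.

Lemma derivationB x y : D (x - y) = D x - D y.
Proof. by apply: (@addIr _ (D y)); rewrite -D_add !subrK. Qed.

Lemma derivation1 : D 1 = 0.
Proof. by apply/esym/(@addrI _ (D 1)); rewrite addr0 -{1}[1]mul1r D_Leibniz mul1r. Qed.

Lemma derivation_sum I (r : seq I) (P : pred I) (F : I -> A) :
  D (\sum_(i <- r | P i) F i) = \sum_(i <- r | P i) D (F i).
Proof. exact: (big_morph D D_add derivation0). Qed.

Lemma derivationMn x n : D (x *+ n) = D x *+ n.
Proof. by elim: n => [|n IHn]; rewrite ?derivation0 // !mulrS D_add IHn. Qed.

Lemma iter_derivation0 n : iter n D 0 = 0.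
Proof. by elim: n => //= n ->; apply: derivation0. Qed.

Lemma iter_derivationD n x y : iter n D (x + y) = iter n D x + iter n D y.
Proof. by elim: n => //= n ->; apply: D_add. Qed.

Lemma iter_derivation_eq0 m n x : iter m D x = 0 -> (m <= n)%N -> iter n D x = 0.
Proof. by move=> Dx0 /subnK <-; rewrite iterD Dx0 iter_derivation0. Qed.

Lemma iter_derivationM n x y :
  iter n D (x * y) = \sum_(i < n.+1) (iter (n - i) D x * iter i D y) *+ 'C(n, i).
Proof.
elim: n => [|n IHn]; first by rewrite big_ord1.
rewrite iterS IHn derivation_sum.
under eq_bigr => i _ do rewrite derivationMn D_Leibniz addrC mulrC mulrnDl.
rewrite big_split /= [X in _ = X]big_ord_recl subn0 bin0.
under [X in _ = _ + X]eq_bigr => i _ do rewrite lift0 subSS binS mulrnDr.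
rewrite big_split /= addrA; congr (_ + _).
rewrite big_ord_recl subn0 bin0 [X in _ = _ + X]big_ord_recr /=.
rewrite bin_small // mulr0n addr0; congr (_ + _); apply: eq_bigr => i _.
by rewrite -[D _]/(iter (n - i.+1).+1 D x) subnSK.
Qed.

Lemma iter_derivationM_eq0 m n x y :
  iter m D x = 0 -> iter n D y = 0 -> iter (m + n) D (x * y) = 0.
Proof.
move=> Dx0 Dy0; rewrite iter_derivationM big1 // => i _.
have [ni|ltin] := leqP n i; first by rewrite (iter_derivation_eq0 Dy0 ni) mulr0 mul0rn.
by rewrite (@iter_derivation_eq0 m) ?mul0r ?mul0rn //; lia.
Qed.

Lemma iter_derivationM_leading m n x y :
  iter m.+1 D x = 0 -> iter n.+1 D y = 0 ->
  iter (m + n) D (x * y) = (iter m D x * iter n D y) *+ 'C(m + n, n).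
Proof.
move=> Dx0 Dy0; rewrite iter_derivationM (bigD1 (Ordinal (leq_addl m n : n < (m + n).+1)%N)) //=.
rewrite addnK big1 ?addr0 // => i /eqP ne_in.
have [ltin|ltni|eq_in] := ltngtP i n; last by case: ne_in; apply: val_inj.
  by rewrite (@iter_derivation_eq0 m.+1) ?mul0r ?mul0rn //; lia.
by rewrite (iter_derivation_eq0 Dy0 ltni) mulr0 mul0rn.
Qed.

Lemma exists_last_nonzero_iter k x :
  x != 0 -> iter k D x = 0 -> exists m, iter m D x != 0 /\ iter m.+1 D x = 0.
Proof.
elim: k x => [|k IHk] x x0 Dx0; first by rewrite -[x]/(iter 0 D x) Dx0 eqxx in x0.
have [Dx_eq0|Dx_neq0] := eqVneq (D x) 0; first by exists 0%N.
have [m [Dm Dm1]] := IHk _ Dx_neq0 (etrans (esym (iterSr _ _ _)) Dx0).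
by exists m.+1; split; rewrite iterSr.
Qed.

Lemma derivation_kernel_factorially_closed x y :
  (forall a b : A, a * b = 0 -> a = 0 \/ b = 0) ->
  (forall n, (0 < n)%N -> n%:R != 0 :> A) ->
  locally_nilpotent D -> D (x * y) = 0 -> x * y != 0 -> D x = 0.
Proof.
move=> A_domain A_char0 D_nil Dxy0 xy0.
have [x0 y0] : x != 0 /\ y != 0 by split; apply: contraNneq xy0 => ->; rewrite ?mul0r ?mulr0.
have [[k Dkx] [l Dly]] := (D_nil x, D_nil y).
have [[m [Dmx Dmx1]] [n [Dny Dny1]]] :=
  (exists_last_nonzero_iter x0 Dkx, exists_last_nonzero_iter y0 Dly).
case: m Dmx Dmx1 => // m Dmx Dmx1.
have := iter_derivationM_leading Dmx1 Dny1.
rewrite (iter_derivation_eq0 (Dxy0 : iter 1 D (x * y) = 0)) // -mulr_natl.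
move=> /esym/A_domain[|/A_domain[]] /eqP.
- by rewrite (negPf (A_char0 _ _)) // bin_gt0 leq_addl.
- by rewrite (negPf Dmx).
- by rewrite (negPf Dny).
Qed.

Lemma exists_local_slice z :
  locally_nilpotent D -> D z != 0 -> exists w, D w != 0 /\ D (D w) = 0.
Proof.
move=> D_nil Dz0; have [k Dkz] := D_nil (D z).
have [m [Dmz Dm1z]] := exists_last_nonzero_iter Dz0 Dkz.
exists (iter m D z).
rewrite -[D (iter m D z)]/(iter m.+1 D z) -[D (iter m.+1 D z)]/(iter m.+2 D z).
by split; rewrite iterSr.
Qed.

End Derivation.

Lemma natr_neq0_rmorph (F : numFieldType) (A : nzRingType) (f : {rmorphism F -> A}) n :
  (0 < n)%N -> n%:R != 0 :> A.
Proof. by move=> n_gt0; rewrite -(rmorph_nat f) fmorph_eq0 pnatr_eq0 -lt0n. Qed.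

Lemma rmorph_poly2_ind (R : comNzRingType) (A : nzRingType)
    (phi : {rmorphism {poly {poly R}} -> A}) (P : A -> Prop) :
  (forall a, P (phi (cst a))) -> P (phi (varU R)) -> P (phi (varV R)) ->
  (forall x y, P x -> P y -> P (x + y)) -> (forall x y, P x -> P y -> P (x * y)) ->
  forall p, P (phi p).
Proof.
move=> Pcst PU PV PD PM.
have P0 : P 0 by have := Pcst 0; rewrite /cst !polyC0 rmorph0.
have PC (q : {poly R}) : P (phi q%:P).
  elim/poly_ind: q => [|q c Pq]; first by rewrite rmorph0.
  by rewrite polyCD polyCM !rmorphD rmorphM; apply: PD; [apply: PM | apply: Pcst].
elim/poly_ind => [|p q Pp]; first by rewrite rmorph0.
by rewrite rmorphD rmorphM; apply: PD => //; apply: PM.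
Qed.

Section RelationAlgebra.
Variables (R : comNzRingType) (r s : R) (A : comNzRingType).
Variable phi : {rmorphism {poly {poly R}} -> A}.
Hypotheses (phi_surj : forall a : A, exists p, phi p = a)
  (phi_relf : phi (relf r s) = 0).

Local Notation ofR a := (phi (cst a)).
Local Notation u := (phi (varU R)).
Local Notation v := (phi (varV R)).

Lemma ofRM a b : ofR a * ofR b = ofR (a * b).
Proof. by rewrite -rmorphM /cst !polyCM. Qed.

Lemma relation_uv : ofR r * u - ofR s * v = 1.
Proof. by apply/eqP; rewrite -subr_eq0 -phi_relf /relf !rmorphB !rmorphM rmorph1. Qed.

(* The h with D = h E; it is forced by [r D(u) = s D(v)] and [r u - s v = 1]. *)
Definition E_coef (D : A -> A) : A := u * D v - v * D u.

Variable E : A -> A.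
Hypotheses (E_der : is_derivation (fun a : R => ofR a) E)
  (Eu : E u = ofR s) (Ev : E v = ofR r).

Lemma E_ofR a : E (ofR a) = 0.
Proof.
have [_ E_lin E_M] := E_der.
by have := E_lin a 1; rewrite mulr1 derivation1 ?mulr0.
Qed.

Lemma derivation_eq_E_coef_mulE (D : A -> A) :
  {morph D : x y / x + y} -> (forall x y, D (x * y) = x * D y + y * D x) ->
  (forall a, D (ofR a) = 0) -> forall x, D x = E_coef D * E x.
Proof.
move=> D_D D_M D_R; have [E_D _ E_M] := E_der.
have D_lin a x : D (ofR a * x) = ofR a * D x by rewrite D_M D_R mulr0 addr0.
have D_rel : ofR r * D u = ofR s * D v.
  apply/eqP; rewrite -subr_eq0 -!D_lin -derivationB // relation_uv.
  exact/eqP/derivation1.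
have Du : D u = ofR s * E_coef D.
  transitivity (u * (ofR r * D u) - ofR s * v * D u).
    by rewrite -{1}(mulr1 (D u)) -relation_uv; ring.
  by rewrite D_rel /E_coef; ring.
have Dv : D v = ofR r * E_coef D.
  transitivity (ofR r * u * D v - v * (ofR s * D v)).
    by rewrite -{1}(mulr1 (D v)) -relation_uv; ring.
  by rewrite -D_rel /E_coef; ring.
move=> x; have [p <-] := phi_surj x; move: p.
apply: (rmorph_poly2_ind (P := fun y => D y = E_coef D * E y)).
- by move=> a; rewrite D_R E_ofR mulr0.
- by rewrite Du Eu mulrC.
- by rewrite Dv Ev mulrC.
- by move=> y z Dy Dz; rewrite D_D E_D Dy Dz mulrDr.
- by move=> y z Dy Dz; rewrite D_M E_M Dy Dz; ring.
Qed.

Lemma E_E_coef_eq0 (D : A -> A) :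
  (forall a b : A, a * b = 0 -> a = 0 \/ b = 0) ->
  (forall n, (0 < n)%N -> n%:R != 0 :> A) ->
  {morph D : x y / x + y} -> (forall x y, D (x * y) = x * D y + y * D x) ->
  (forall a, D (ofR a) = 0) -> locally_nilpotent D ->
  E (E_coef D) = 0.
Proof.
move=> A_domain A_char0 D_D D_M D_R D_nil; have [E_D _ _] := E_der.
have D_eq := derivation_eq_E_coef_mulE D_D D_M D_R.
have [->|coef0] := eqVneq (E_coef D) 0; first exact: derivation0.
have [z Dz0] : exists z, D z != 0.
  have [Du0|] := eqVneq (D u) 0; last by exists u.
  exists v; apply: contra_neq coef0 => Dv0.
  by rewrite /E_coef Du0 Dv0 !mulr0 subrr.
have [w [Dw0 DDw0]] := exists_local_slice D_nil Dz0.
have D_coef : D (E_coef D) = 0.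
  by apply: (derivation_kernel_factorially_closed D_D D_M A_domain A_char0 D_nil (y := E w));
    rewrite -D_eq.
have := D_eq (E_coef D); rewrite D_coef => /esym/A_domain[/eqP|//].
by rewrite (negPf coef0).
Qed.

Lemma mulE_is_LND (K : Type) (k : K -> R) a (D : A -> A) :
  (forall x, D x = ofR a * E x) -> is_LND (fun c : K => ofR (k c)) D.
Proof.
move=> D_eq; have [E_D E_lin E_M] := E_der.
have D_D : {morph D : x y / x + y} by move=> x y; rewrite !D_eq E_D mulrDr.
have D_M x y : D (x * y) = x * D y + y * D x by rewrite !D_eq E_M; ring.
have D_R b : D (ofR b) = 0 by rewrite D_eq E_ofR mulr0.
split; first by split=> // c x; rewrite !D_eq E_lin mulrCA.
move=> x; have [p <-] := phi_surj x; move: p.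
apply: (rmorph_poly2_ind (P := fun y => exists n, iter n D y = 0)).
- by move=> b; exists 1%N; apply: D_R.
- by exists 2%N; rewrite /= [D u]D_eq Eu ofRM D_R.
- by exists 2%N; rewrite /= [D v]D_eq Ev ofRM D_R.
- move=> y z [m Dmy] [n Dnz]; exists (m + n)%N.
  rewrite iter_derivationD // (iter_derivation_eq0 D_D Dmy) ?leq_addr //.
  by rewrite (iter_derivation_eq0 D_D Dnz) ?leq_addl // addr0.
- by move=> y z [m Dmy] [n Dnz]; exists (m + n)%N; apply: iter_derivationM_eq0.
Qed.

End RelationAlgebra.

Theorem mainTheorem3 (R : comAlgType CC) (r s : R)
  (A : comNzRingType) (phi : {rmorphism {poly {poly R}} -> A}) :
  is_noetherian R -> is_UFD R ->
  r <> 0 -> s <> 0 ->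
  (forall d : R, dvdr_ d r -> dvdr_ d s -> unit_ d) ->
  (forall a : A, exists p, phi p = a) ->
  (forall p, phi p = 0 <-> exists g, p = g * relf r s) ->
  is_UFD A ->
  (forall x : A, (forall D : A -> A,
       is_LND (fun c : CC => phi (cst (c%:A))) D -> D x = 0)
     <-> exists a : R, x = phi (cst a)) ->
  forall E : A -> A,
    is_derivation (fun a : R => phi (cst a)) E ->
    E (phi (varU R)) = phi (cst s) ->
    E (phi (varV R)) = phi (cst r) ->
  forall D : A -> A,
    is_LND (fun c : CC => phi (cst (c%:A))) D <->
    exists a : R, forall x, D x = phi (cst a) * E x.
Proof.
move=> _ _ _ _ _ phi_surj phi_ker [_ A_domain _ _] ML E E_der Eu Ev D.
have phi_relf : phi (relf r s) = 0 by apply/phi_ker; exists 1; rewrite mul1r.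
have A_char0 n : (0 < n)%N -> n%:R != 0 :> A.
  exact: (natr_neq0_rmorph (phi \o polyC \o polyC \o in_alg R)%FUN).
have LND_R D' : is_LND (fun c : CC => phi (cst c%:A)) D' -> forall a, D' (phi (cst a)) = 0.
  by move=> D'_LND a; apply: (proj2 (ML _)) => //; exists a.
have LND_eq D' : is_LND (fun c : CC => phi (cst c%:A)) D' ->
    forall x, D' x = E_coef phi D' * E x.
  move=> D'_LND; have [[D'_D _ D'_M] _] := D'_LND.
  exact: (derivation_eq_E_coef_mulE phi_surj phi_relf E_der Eu Ev D'_D D'_M (LND_R _ D'_LND)).
split=> [D_LND | [a D_eq]]; last exact: (mulE_is_LND phi_surj E_der Eu Ev _ D_eq).
have [a coefD] : exists a, E_coef phi D = phi (cst a).
  apply/ML => D' D'_LND; rewrite LND_eq //.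
  have [[D_D _ D_M] D_nil] := D_LND.
  by rewrite (E_E_coef_eq0 phi_surj phi_relf E_der Eu Ev A_domain A_char0 D_D D_M (LND_R _ D_LND) D_nil) mulr0.
by exists a => x; rewrite LND_eq // coefD.
Qed.
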